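(* Let $\lambda,\mu,\nu\in\mathbb{R}$, not all zero, and let $G\subseteq\mathbb{R}\times\mathrm{U}(1)^2$ be the subgroup of elements $(c,e^{i\phi_1},e^{i\phi_2})$ with $\lambda c+\mu\phi_1+\nu\phi_2=0$, acting on $\mathbb{R}\oplus\mathbb{C}^3$ by $(x_1,z_1,z_2,z_3)\mapsto(x_1+c,e^{i\phi_1}z_1,e^{i\phi_2}z_2,e^{-i(\phi_1+\phi_2)}z_3)$. Let $x_1(t)$ be real and $z_1(t),z_2(t),z_3(t)$ complex smooth functions satisfying $$\dot x_1=0,\quad \dot z_1=-\nu z_1-\lambda\overline{z_2z_3},\quad \dot z_2=\mu z_2-\lambda\overline{z_3z_1},\quad \dot z_3=(\nu-\mu)z_3-\lambda\overline{z_1z_2},$$ with initial point whose $G$-orbit is $2$-dimensional. Then there exists $\epsilon>0$ such that a solution exists for $t\in(-\epsilon,\epsilon)$, and $$M=\big\{\big(x_1(t)+c,\,e^{i\phi_1}z_1(t),\,e^{i\phi_2}z_2(t),\,e^{-i(\phi_1+\phi_2)}z_3(t)\big):t\in(-\epsilon,\epsilon),\ (c,e^{i\phi_1},e^{i\phi_2})\in G\big\}$$ is an associative $3$-fold in $\mathbb{R}^7$. Moreover, if $\mu,\nu$ are not both zero, $M$ does not lie in $\{x\}\times\mathbb{C}^3$ for any $x\in\mathbb{R}$, and along solutions $\mathrm{Im}(z_1z_2z_3)=A$ is a real constant.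
   Context: $\mathbb{R}^7\cong\mathbb{R}\oplus\mathbb{C}^3$ via $z_1=x_2+ix_3$, $z_2=x_4+ix_5$, $z_3=x_6+ix_7$. Associative $3$-folds are oriented $3$-dimensional submanifolds calibrated by $\varphi_0=d\mathbf{x}_{123}+d\mathbf{x}_{145}+d\mathbf{x}_{167}+d\mathbf{x}_{246}-d\mathbf{x}_{257}-d\mathbf{x}_{347}-d\mathbf{x}_{356}$ ($d\mathbf{x}_{ijk}=dx_i\wedge dx_j\wedge dx_k$), i.e. $\varphi_0|_{T_xN}=\mathrm{vol}_{T_xN}$. *)

From Stdlib Require Import Reals.
From Coquelicot Require Import Coquelicot.
Open Scope R_scope.

(* A point of R^7 = R (+) C^3, stored as (x1, z1, z2, z3) with
   z1 = x2 + i x3, z2 = x4 + i x5, z3 = x6 + i x7. *)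
Definition pt : Type := (R * C * C * C)%type.

Definition mkpt (x : R) (z1 z2 z3 : C) : pt := (x, z1, z2, z3).
Definition px1 (p : pt) : R := fst (fst (fst p)).
Definition pz1 (p : pt) : C := snd (fst (fst p)).
Definition pz2 (p : pt) : C := snd (fst p).
Definition pz3 (p : pt) : C := snd p.

Definition xc (i : nat) (p : pt) : R :=
  match i with
  | 1%nat => px1 p
  | 2%nat => Re (pz1 p) | 3%nat => Im (pz1 p)
  | 4%nat => Re (pz2 p) | 5%nat => Im (pz2 p)
  | 6%nat => Re (pz3 p) | 7%nat => Im (pz3 p)
  | _ => 0
  end.

Definition det3 (a11 a12 a13 a21 a22 a23 a31 a32 a33 : R) : R :=
  a11 * (a22 * a33 - a23 * a32) - a12 * (a21 * a33 - a23 * a31)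
  + a13 * (a21 * a32 - a22 * a31).

Definition dx3 (i j k : nat) (u v w : pt) : R :=
  det3 (xc i u) (xc i v) (xc i w)
       (xc j u) (xc j v) (xc j w)
       (xc k u) (xc k v) (xc k w).

Definition phi0 (u v w : pt) : R :=
  dx3 1 2 3 u v w + dx3 1 4 5 u v w + dx3 1 6 7 u v w + dx3 2 4 6 u v w
  - dx3 2 5 7 u v w - dx3 3 4 7 u v w - dx3 3 5 6 u v w.

Definition ip (u v : pt) : R :=
  xc 1 u * xc 1 v + xc 2 u * xc 2 v + xc 3 u * xc 3 v + xc 4 u * xc 4 v
  + xc 5 u * xc 5 v + xc 6 u * xc 6 v + xc 7 u * xc 7 v.

Definition gram3 (u v w : pt) : R :=
  det3 (ip u u) (ip u v) (ip u w)
       (ip v u) (ip v v) (ip v w)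
       (ip w u) (ip w v) (ip w w).

(* volume form of the oriented 3-plane spanned by (u,v,w), with orientation
   sign s = +1 (orientation of (u,v,w)) or s = -1 (opposite orientation) *)
Definition vol3 (s : R) (u v w : pt) : R := s * sqrt (gram3 u v w).

Definition e1 : R * R * R := (1, 0, 0).
Definition e2 : R * R * R := (0, 1, 0).
Definition e3 : R * R * R := (0, 0, 1).

(* An (immersed) associative 3-fold: M is the image of an open set U of R^3
   under a C^1 immersion f, oriented by a continuous orientation sign s
   (relative to the coordinate orientation of U), and phi0 restricted to
   each oriented tangent space df_u(R^3) equals its volume form. *)
Definition associative_3fold (M : pt -> Prop) : Prop :=
  exists (U : R * R * R -> Prop) (f : R * R * R -> pt)
         (df : R * R * R -> R * R * R -> pt) (s : R * R * R -> R),
    open U /\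
    (forall p, M p <-> exists u, U u /\ f u = p) /\
    (forall u, U u -> filterdiff f (locally u) (df u)) /\
    (forall u h, U u -> continuous (fun y => df y h) u) /\
    (forall u h, U u -> df u h = zero -> h = zero) /\
    (forall u, U u -> s u = 1 \/ s u = -1) /\
    (forall u, U u -> continuous s u) /\
    (forall u, U u ->
       phi0 (df u e1) (df u e2) (df u e3)
       = vol3 (s u) (df u e1) (df u e2) (df u e3)).

Definition eiphi (phi : R) : C := (cos phi, sin phi).

Definition act (c phi1 phi2 : R) (p : pt) : pt :=
  mkpt (px1 p + c) (eiphi phi1 * pz1 p)%C (eiphi phi2 * pz2 p)%C
       (eiphi (- (phi1 + phi2)) * pz3 p)%C.

(* G = { (c, e^{i phi1}, e^{i phi2}) : lambda c + mu phi1 + nu phi2 = 0 };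
   an element of R x U(1)^2 lies in G iff it has such a representative. *)
Definition inG (lam mu nu c phi1 phi2 : R) : Prop :=
  lam * c + mu * phi1 + nu * phi2 = 0.

(* Dimension of the G-orbit through p is 2: the infinitesimal action of the
   (2-dimensional) Lie algebra g = {(c,a1,a2) : lam c + mu a1 + nu a2 = 0}
   at p, (c,a1,a2) |-> (c, i a1 z1, i a2 z2, -i (a1+a2) z3), is injective
   (orbit dimension = rank of the infinitesimal action). *)
Definition orbit_dim2 (lam mu nu : R) (p : pt) : Prop :=
  forall c a1 a2 : R,
    inG lam mu nu c a1 a2 ->
    c = 0 ->
    (RtoC a1 * Ci * pz1 p)%C = RtoC 0 ->
    (RtoC a2 * Ci * pz2 p)%C = RtoC 0 ->
    (RtoC (- (a1 + a2)) * Ci * pz3 p)%C = RtoC 0 ->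
    a1 = 0 /\ a2 = 0.

Definition is_solution (lam mu nu a b : R) (x1 : R -> R) (z1 z2 z3 : R -> C)
  : Prop :=
  forall t, a < t < b ->
    is_derive x1 t 0 /\
    is_derive z1 t (RtoC (- nu) * z1 t - RtoC lam * Cconj (z2 t * z3 t))%C /\
    is_derive z2 t (RtoC mu * z2 t - RtoC lam * Cconj (z3 t * z1 t))%C /\
    is_derive z3 t (RtoC (nu - mu) * z3 t - RtoC lam * Cconj (z1 t * z2 t))%C.

Definition Mset (lam mu nu eps : R) (x1 : R -> R) (z1 z2 z3 : R -> C)
  (p : pt) : Prop :=
  exists t c phi1 phi2,
    - eps < t < eps /\ inG lam mu nu c phi1 phi2 /\
    p = act c phi1 phi2 (mkpt (x1 t) (z1 t) (z2 t) (z3 t)).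

(* The ODE is the flow of a vector field V on R^7 built from the orbit directions: if b1, b2 span
   the Lie algebra of G and b1 x b2 = k (lam, mu, nu), then the infinitesimal actions X1, X2 of
   b1, b2 satisfy phi0(X1, X2, V) = k |V|^2, |X1 /\ X2|^2 = k^2 |V|^2 and X1, X2 _|_ V.  So
   (X1, X2, V) spans a phi0-calibrated 3-plane (oriented by the sign of k) wherever V <> 0, and
   V <> 0 at the initial point precisely because its orbit is 2-dimensional.  Since V is
   G-equivariant, for a local solution gamma (by Picard iteration) the map
   (s1, s2, t) |-> exp(s1 b1 + s2 b2) . gamma(t) is an immersion with differential
   (X1, X2, V) that parametrises M, so M is associative.  Im(z1 z2 z3) is conserved by a direct
   computation, and when (mu, nu) <> 0 the group G contains a translation in x1. *)

From Stdlib Require Import Reals Lra Lia Psatz.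
From Coquelicot Require Import Coquelicot.
Open Scope R_scope.

(** * Local existence by Picard iteration *)

Lemma continuous_of_lipschitz (f : R -> R) (M t : R) :
  0 <= M -> (forall s, Rabs (f s - f t) <= M * Rabs (s - t)) -> continuous f t.
Proof.
  intros HM Hf. apply filterlim_locally. intros e.
  assert (He : 0 < e) by apply cond_pos.
  assert (Hd : 0 < e / (M + 1)) by (apply Rdiv_lt_0_compat; lra).
  exists (mkposreal _ Hd). intros s Hs. change (Rabs (s - t) < e / (M + 1)) in Hs.
  change (Rabs (f s - f t) < e).
  apply Rle_lt_trans with (M * (e / (M + 1))).
  - eapply Rle_trans; [apply Hf|]. apply Rmult_le_compat_l; lra.
  - apply Rlt_le_trans with ((M + 1) * (e / (M + 1))); [nra|]. right. field. lra.
Qed.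

Lemma abs_RInt_le_const_dist (f : R -> R) (a b M : R) :
  (forall x y, ex_RInt f x y) -> (forall s, Rabs (f s) <= M) ->
  Rabs (RInt f a b) <= M * Rabs (b - a).
Proof.
  intros Hex HM. destruct (Rle_dec a b) as [Hab|Hab].
  - rewrite (Rabs_right (b - a)) by lra. rewrite Rmult_comm.
    apply abs_RInt_le_const; auto.
  - rewrite <- opp_RInt_swap by auto. change (Rabs (- RInt f b a) <= M * Rabs (b - a)).
    rewrite Rabs_Ropp, (Rabs_left (b - a)) by lra.
    replace (- (b - a)) with (a - b) by ring. rewrite Rmult_comm.
    apply abs_RInt_le_const; auto. lra.
Qed.

Definition clamp (eps t : R) : R := Rmax (- eps) (Rmin eps t).

Lemma clamp_lipschitz eps t t' : Rabs (clamp eps t - clamp eps t') <= Rabs (t - t').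
Proof. unfold clamp, Rmax, Rmin. repeat destruct Rle_dec; split_Rabs; lra. Qed.

Lemma Rabs_clamp_le eps t : 0 < eps -> Rabs (clamp eps t) <= eps.
Proof. intros. unfold clamp, Rmax, Rmin. repeat destruct Rle_dec; split_Rabs; lra. Qed.

Lemma clamp_id eps t : - eps < t < eps -> clamp eps t = t.
Proof. intros. unfold clamp, Rmax, Rmin. repeat destruct Rle_dec; lra. Qed.

Definition state := nat -> R.

Definition lipschitz_path (K : R) (y : R -> state) : Prop :=
  forall t t' i, Rabs (y t i - y t' i) <= K * Rabs (t - t').

Section Picard.

Variable F : state -> state.
Variables (L K eps : R) (w : state).
Hypothesis L_gt0 : 0 < L.
Hypothesis K_ge0 : 0 <= K.
Hypothesis eps_gt0 : 0 < eps.
Hypothesis eps_L : eps * L <= / 2.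
Hypothesis F_bounded : forall x i, Rabs (F x i) <= K.
Hypothesis F_lipschitz : forall x x' d, (forall j, Rabs (x j - x' j) <= d) ->
  forall i, Rabs (F x i - F x' i) <= L * d.

(* Clamping the time to [-eps, eps] makes the Picard map act on paths defined on all of R. *)
Definition picard (y : R -> state) : R -> state :=
  fun t i => w i + RInt (fun s => F (y s) i) 0 (clamp eps t).

Section LipschitzPath.
Variable y : R -> state.
Hypothesis y_lip : lipschitz_path K y.

Lemma continuous_F_path i t : continuous (fun s => F (y s) i) t.
Proof.
  apply (continuous_of_lipschitz _ (L * K)); [nra|].
  intros s. rewrite Rmult_assoc. apply F_lipschitz. intros j. apply y_lip.
Qed.

Lemma ex_RInt_F_path i a b : ex_RInt (fun s => F (y s) i) a b.
Proof. apply (ex_RInt_continuous (V := R_CompleteNormedModule)). intros; apply continuous_F_path. Qed.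

Lemma picard_lipschitz : lipschitz_path K (picard y).
Proof.
  intros t t' i. unfold picard. set (f := fun s => F (y s) i).
  assert (Hc : RInt f 0 (clamp eps t') + RInt f (clamp eps t') (clamp eps t)
               = RInt f 0 (clamp eps t))
    by exact (RInt_Chasles (V := R_CompleteNormedModule) f _ _ _
                (ex_RInt_F_path _ _ _) (ex_RInt_F_path _ _ _)).
  assert (E : forall a b c : R, a + (b + c) - (a + b) = c) by (intros; ring).
  rewrite <- Hc, E.
  eapply Rle_trans; [apply abs_RInt_le_const_dist; [exact (ex_RInt_F_path i) | intros; apply F_bounded]|].
  apply Rmult_le_compat_l; auto. apply clamp_lipschitz.
Qed.

Lemma picard_near_w t i : Rabs (picard y t i - w i) <= eps * K.
Proof.
  unfold picard. rewrite Rplus_comm. unfold Rminus. rewrite Rplus_assoc, Rplus_opp_r, Rplus_0_r.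
  eapply Rle_trans; [apply abs_RInt_le_const_dist; [exact (ex_RInt_F_path i) | intros; apply F_bounded]|].
  rewrite Rmult_comm, Rminus_0_r. apply Rmult_le_compat_r; auto. apply Rabs_clamp_le; auto.
Qed.

End LipschitzPath.

Lemma picard_contraction y y' d : lipschitz_path K y -> lipschitz_path K y' ->
  (forall t j, Rabs (y t j - y' t j) <= d) ->
  forall t i, Rabs (picard y t i - picard y' t i) <= / 2 * d.
Proof.
  intros Hy Hy' Hd t i. unfold picard.
  assert (Hd0 : 0 <= d) by (eapply Rle_trans; [apply Rabs_pos | apply (Hd 0 O)]).
  assert (Hm : RInt (fun s => F (y s) i - F (y' s) i) 0 (clamp eps t)
     = RInt (fun s => F (y s) i) 0 (clamp eps t) - RInt (fun s => F (y' s) i) 0 (clamp eps t))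
    by exact (RInt_minus (V := R_CompleteNormedModule) _ _ _ _
                (ex_RInt_F_path y Hy i _ _) (ex_RInt_F_path y' Hy' i _ _)).
  assert (E : forall a b c : R, a + b - (a + c) = b - c) by (intros; ring).
  rewrite E, <- Hm.
  eapply Rle_trans.
  - apply abs_RInt_le_const_dist.
    + intros a b. apply (ex_RInt_minus (V := R_CompleteNormedModule)); apply ex_RInt_F_path; auto.
    + intros s. apply F_lipschitz. intros j. apply Hd.
  - rewrite Rminus_0_r. apply Rle_trans with (L * d * eps); [|nra].
    apply Rmult_le_compat_l; [nra | apply Rabs_clamp_le; auto].
Qed.

Fixpoint picard_iter (n : nat) : R -> state :=
  match n with O => fun _ => w | S n => picard (picard_iter n) end.

Lemma picard_iter_lipschitz n : lipschitz_path K (picard_iter n).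
Proof.
  induction n as [|n IH]; simpl.
  - intros t t' i. rewrite Rminus_eq_0, Rabs_R0. apply Rmult_le_pos; auto. apply Rabs_pos.
  - apply picard_lipschitz, IH.
Qed.

Lemma picard_iter_step n t i :
  Rabs (picard_iter (S n) t i - picard_iter n t i) <= eps * K * (/ 2) ^ n.
Proof.
  revert t i. induction n as [|n IH]; intros t i.
  - rewrite Rmult_1_r. apply (picard_near_w (fun _ => w)).
    intros a b j. rewrite Rminus_eq_0, Rabs_R0. apply Rmult_le_pos; auto. apply Rabs_pos.
  - eapply Rle_trans.
    + apply (picard_contraction (picard_iter (S n)) (picard_iter n) (eps * K * (/ 2) ^ n));
        auto using picard_iter_lipschitz.
    + simpl. right; ring.
Qed.

Lemma picard_iter_cauchy N n t i : (N <= n)%nat ->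
  Rabs (picard_iter n t i - picard_iter N t i) <= 2 * eps * K * (/ 2) ^ N.
Proof.
  intros HNn.
  assert (Hsum : forall m, Rabs (picard_iter (N + m) t i - picard_iter N t i)
                           <= 2 * eps * K * (/ 2) ^ N * (1 - (/ 2) ^ m)).
  { induction m as [|m IH].
    - rewrite Nat.add_0_r, Rminus_eq_0, Rabs_R0. simpl. right; ring.
    - rewrite Nat.add_succ_r.
      replace (picard_iter (S (N + m)) t i - picard_iter N t i) with
        ((picard_iter (S (N + m)) t i - picard_iter (N + m) t i)
         + (picard_iter (N + m) t i - picard_iter N t i)) by ring.
      eapply Rle_trans; [apply Rabs_triang|].
      eapply Rle_trans; [apply Rplus_le_compat; [apply picard_iter_step | apply IH]|].
      rewrite pow_add. simpl. right; field. }
  assert (0 <= eps * K * (/ 2) ^ N * (/ 2) ^ (n - N))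
    by (repeat apply Rmult_le_pos; try apply pow_le; lra).
  specialize (Hsum (n - N)%nat). replace (N + (n - N))%nat with n in Hsum by lia. lra.
Qed.

Definition path_space : CompleteSpace :=
  fct_CompleteSpace (T := R) (U := fct_CompleteSpace (T := nat) (U := R_CompleteSpace)).

Definition picard_limit : R -> state :=
  lim (T := path_space) (filtermap (picard_iter : nat -> path_space) eventually).

Lemma picard_iter_cvg_unif e : 0 < e -> exists N, forall n, (N <= n)%nat ->
  forall t i, Rabs (picard_iter n t i - picard_limit t i) < e.
Proof.
  intros He.
  destruct (complete_cauchy (T := path_space) (filtermap (picard_iter : nat -> path_space) eventually)
              (filtermap_proper_filter _ _ _ _ eventually_filter)) with (mkposreal e He) as [N HN].
  - intros e'. assert (He' : 0 < e') by apply cond_pos.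
    assert (HeK : 0 <= eps * K) by nra.
    destruct (pow_lt_1_zero (/ 2)) with (e' / (2 * eps * K + 1)) as [N HN].
    + rewrite Rabs_right; lra.
    + apply Rdiv_lt_0_compat; lra.
    + exists (picard_iter N), N. intros n Hn t i.
      change (Rabs (picard_iter n t i - picard_iter N t i) < e').
      eapply Rle_lt_trans; [apply picard_iter_cauchy, Hn|].
      specialize (HN N (Nat.le_refl N)).
      rewrite Rabs_right in HN by (apply Rle_ge, pow_le; lra).
      apply (Rmult_lt_compat_l (2 * eps * K + 1)) in HN; [|lra].
      replace ((2 * eps * K + 1) * (e' / (2 * eps * K + 1))) with (pos e') in HN by (field; lra).
      assert (0 <= (/ 2) ^ N) by (apply pow_le; lra). lra.
  - exists N. intros n Hn t i. exact (HN n Hn t i).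
Qed.

Lemma picard_limit_lipschitz : lipschitz_path K picard_limit.
Proof.
  intros t t' i. apply le_epsilon. intros e He.
  destruct (picard_iter_cvg_unif (e / 2)) as [N HN]; [lra|].
  specialize (HN N (Nat.le_refl _)).
  assert (H1 := HN t i). assert (H2 := HN t' i). assert (H3 := picard_iter_lipschitz N t t' i).
  split_Rabs; lra.
Qed.

Lemma picard_limit_fixed t i : picard_limit t i = picard picard_limit t i.
Proof.
  apply Rminus_diag_uniq, Rabs_eq_0, Rle_antisym; [|apply Rabs_pos].
  apply le_epsilon. intros e He. rewrite Rplus_0_l.
  destruct (picard_iter_cvg_unif (e / 2)) as [N HN]; [lra|].
  assert (H1 := HN (S N) (Nat.le_succ_diag_r N) t i).
  assert (H2 : forall t j, Rabs (picard_iter N t j - picard_limit t j) <= e / 2)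
    by (intros; left; apply HN; lia).
  assert (H3 := picard_contraction _ _ _ (picard_iter_lipschitz N) picard_limit_lipschitz H2 t i).
  simpl in H1. split_Rabs; lra.
Qed.

Lemma picard_limit_0 i : picard_limit 0 i = w i.
Proof.
  rewrite picard_limit_fixed. unfold picard. rewrite clamp_id by lra.
  rewrite RInt_point. unfold zero; simpl; ring.
Qed.

Lemma picard_limit_near_w t i : Rabs (picard_limit t i - w i) <= eps * K.
Proof. rewrite picard_limit_fixed. apply picard_near_w, picard_limit_lipschitz. Qed.

Lemma picard_limit_derive t i : - eps < t < eps ->
  is_derive (fun s => picard_limit s i) t (F (picard_limit t) i).
Proof.
  intros Ht. set (f := fun s => F (picard_limit s) i).
  apply (is_derive_ext_loc (fun s => w i + RInt f 0 s)).
  - assert (Hr : 0 < Rmin (eps - t) (eps + t)) by (apply Rmin_pos; lra).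
    exists (mkposreal _ Hr). intros s Hs. change (Rabs (s - t) < Rmin (eps - t) (eps + t)) in Hs.
    assert (Hs1 := Rmin_l (eps - t) (eps + t)). assert (Hs2 := Rmin_r (eps - t) (eps + t)).
    rewrite picard_limit_fixed. unfold picard. rewrite clamp_id; [reflexivity|]. split_Rabs; lra.
  - assert (HD : is_derive (fun s => RInt f 0 s) t (f t)).
    { apply (is_derive_RInt f (fun s => RInt f 0 s) 0 t).
      + exists (mkposreal _ Rlt_0_1). intros b _.
        apply (RInt_correct (V := R_CompleteNormedModule)), ex_RInt_F_path, picard_limit_lipschitz.
      + apply continuous_F_path, picard_limit_lipschitz. }
    apply (is_derive_plus (fun _ => w i) _ t zero (f t) (is_derive_const (w i) t)) in HD.
    replace (F (picard_limit t) i) with (plus (@zero R_NormedModule) (f t)); [exact HD|].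
    unfold plus, zero; simpl; unfold f; ring.
Qed.

End Picard.

Lemma picard_lindelof (F : state -> state) (L K eps : R) (w : state) :
  0 < L -> 0 <= K -> 0 < eps -> eps * L <= / 2 ->
  (forall x i, Rabs (F x i) <= K) ->
  (forall x x' d, (forall j, Rabs (x j - x' j) <= d) ->
     forall i, Rabs (F x i - F x' i) <= L * d) ->
  exists y : R -> state,
    (forall i, y 0 i = w i) /\ (forall t i, Rabs (y t i - w i) <= eps * K) /\
    forall t i, - eps < t < eps -> is_derive (fun s => y s i) t (F (y t) i).
Proof.
  intros. exists (picard_limit F eps w).
  split; [|split]; intros;
    [apply (picard_limit_0 F L K) | apply (picard_limit_near_w F L K)
    | apply (picard_limit_derive F L K)]; auto.
Qed.

(** * The ODE in real coordinates *)

Definition ode_term (c l s1 s2 x a b e f : R) : R := c * x + l * (s1 * (a * b) + s2 * (e * f)).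

(* Coordinates 0, ..., 5 of the state are Re z1, Im z1, Re z2, Im z2, Re z3, Im z3. *)
Definition ode_field (lam mu nu : R) (x : state) : state := fun i =>
  match i with
  | 0 => ode_term (- nu) lam (-1) 1 (x 0%nat) (x 2%nat) (x 4%nat) (x 3%nat) (x 5%nat)
  | 1 => ode_term (- nu) lam 1 1 (x 1%nat) (x 2%nat) (x 5%nat) (x 3%nat) (x 4%nat)
  | 2 => ode_term mu lam (-1) 1 (x 2%nat) (x 4%nat) (x 0%nat) (x 5%nat) (x 1%nat)
  | 3 => ode_term mu lam 1 1 (x 3%nat) (x 4%nat) (x 1%nat) (x 5%nat) (x 0%nat)
  | 4 => ode_term (nu - mu) lam (-1) 1 (x 4%nat) (x 0%nat) (x 2%nat) (x 1%nat) (x 3%nat)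
  | 5 => ode_term (nu - mu) lam 1 1 (x 5%nat) (x 0%nat) (x 3%nat) (x 1%nat) (x 2%nat)
  | _ => 0
  end.

Lemma Rabs_mul_sub_le a b a' b' B d :
  Rabs a <= B -> Rabs b' <= B -> Rabs (a - a') <= d -> Rabs (b - b') <= d ->
  Rabs (a * b - a' * b') <= 2 * B * d.
Proof.
  intros Ha Hb' Haa' Hbb'.
  replace (a * b - a' * b') with (a * (b - b') + b' * (a - a')) by ring.
  eapply Rle_trans; [apply Rabs_triang|]. rewrite !Rabs_mult.
  assert (Rabs a * Rabs (b - b') <= B * d) by (apply Rmult_le_compat; auto; apply Rabs_pos).
  assert (Rabs b' * Rabs (a - a') <= B * d) by (apply Rmult_le_compat; auto; apply Rabs_pos).
  lra.
Qed.

Lemma Rabs_mul_le a b c d : Rabs a <= c -> Rabs b <= d -> Rabs (a * b) <= c * d.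
Proof. intros. rewrite Rabs_mult. apply Rmult_le_compat; auto; apply Rabs_pos. Qed.

Lemma ode_term_lipschitz c l s1 s2 x a b e f x' a' b' e' f' Lam B d :
  Rabs c <= Lam -> Rabs l <= Lam -> Rabs s1 <= 1 -> Rabs s2 <= 1 ->
  Rabs a <= B -> Rabs b' <= B -> Rabs e <= B -> Rabs f' <= B ->
  Rabs (x - x') <= d -> Rabs (a - a') <= d -> Rabs (b - b') <= d ->
  Rabs (e - e') <= d -> Rabs (f - f') <= d ->
  Rabs (ode_term c l s1 s2 x a b e f - ode_term c l s1 s2 x' a' b' e' f')
  <= Lam * (1 + 4 * B) * d.
Proof.
  intros Hc Hl Hs1 Hs2 Ha Hb He Hf Hx Ha' Hb' He' Hf'. unfold ode_term.
  replace (_ - _) with (c * (x - x') + l * (s1 * (a * b - a' * b') + s2 * (e * f - e' * f')))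
    by ring.
  assert (Hs : Rabs (s1 * (a * b - a' * b') + s2 * (e * f - e' * f')) <= 4 * B * d).
  { eapply Rle_trans; [apply Rabs_triang|].
    assert (Rabs (s1 * (a * b - a' * b')) <= 1 * (2 * B * d))
      by (apply Rabs_mul_le; auto; apply Rabs_mul_sub_le; auto).
    assert (Rabs (s2 * (e * f - e' * f')) <= 1 * (2 * B * d))
      by (apply Rabs_mul_le; auto; apply Rabs_mul_sub_le; auto).
    lra. }
  eapply Rle_trans; [apply Rabs_triang|].
  assert (Rabs (c * (x - x')) <= Lam * d) by (apply Rabs_mul_le; auto).
  assert (Rabs (l * (s1 * (a * b - a' * b') + s2 * (e * f - e' * f'))) <= Lam * (4 * B * d))
    by (apply Rabs_mul_le; auto).
  lra.
Qed.

Lemma ode_term_bound c l s1 s2 x a b e f Lam B :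
  Rabs c <= Lam -> Rabs l <= Lam -> Rabs s1 <= 1 -> Rabs s2 <= 1 ->
  Rabs x <= B -> Rabs a <= B -> Rabs b <= B -> Rabs e <= B -> Rabs f <= B ->
  Rabs (ode_term c l s1 s2 x a b e f) <= Lam * (B + 2 * (B * B)).
Proof.
  intros Hc Hl Hs1 Hs2 Hx Ha Hb He Hf. unfold ode_term.
  assert (Hs : Rabs (s1 * (a * b) + s2 * (e * f)) <= 2 * (B * B)).
  { eapply Rle_trans; [apply Rabs_triang|].
    assert (Rabs (s1 * (a * b)) <= 1 * (B * B)) by (apply Rabs_mul_le; auto; apply Rabs_mul_le; auto).
    assert (Rabs (s2 * (e * f)) <= 1 * (B * B)) by (apply Rabs_mul_le; auto; apply Rabs_mul_le; auto).
    lra. }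
  eapply Rle_trans; [apply Rabs_triang|].
  assert (Rabs (c * x) <= Lam * B) by (apply Rabs_mul_le; auto).
  assert (Rabs (l * (s1 * (a * b) + s2 * (e * f))) <= Lam * (2 * (B * B))) by (apply Rabs_mul_le; auto).
  lra.
Qed.

Section Truncation.

Variables (lam mu nu : R) (w : state).

Definition coef_bound : R := Rabs lam + Rabs mu + Rabs nu.

Definition box_bound : R := 1 + Rabs (w 0%nat) + Rabs (w 1%nat) + Rabs (w 2%nat)
  + Rabs (w 3%nat) + Rabs (w 4%nat) + Rabs (w 5%nat).

Definition box_clamp (x : state) : state := fun j => Rmax (w j - 1) (Rmin (w j + 1) (x j)).

(* Agrees with ode_field on the unit box around w, which the solution never leaves. *)
Definition truncated_field (x : state) : state := ode_field lam mu nu (box_clamp x).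

Definition trunc_lip : R := coef_bound * (1 + 4 * box_bound) + 1.
Definition trunc_bound : R := coef_bound * (box_bound + 2 * (box_bound * box_bound)).
Definition trunc_eps : R := Rmin (/ (2 * trunc_lip)) (/ (trunc_bound + 1)).

Lemma box_clamp_lipschitz x x' j : Rabs (box_clamp x j - box_clamp x' j) <= Rabs (x j - x' j).
Proof. unfold box_clamp, Rmax, Rmin. repeat destruct Rle_dec; split_Rabs; lra. Qed.

Lemma box_clamp_id x j : Rabs (x j - w j) <= 1 -> box_clamp x j = x j.
Proof. intros. unfold box_clamp, Rmax, Rmin. repeat destruct Rle_dec; split_Rabs; lra. Qed.

Lemma coef_bound_ge0 : 0 <= coef_bound.
Proof.
  unfold coef_bound. pose proof (Rabs_pos lam). pose proof (Rabs_pos mu).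
  pose proof (Rabs_pos nu). lra.
Qed.

Lemma box_bound_ge1 : 1 <= box_bound.
Proof.
  unfold box_bound. pose proof (Rabs_pos (w 0%nat)). pose proof (Rabs_pos (w 1%nat)).
  pose proof (Rabs_pos (w 2%nat)). pose proof (Rabs_pos (w 3%nat)).
  pose proof (Rabs_pos (w 4%nat)). pose proof (Rabs_pos (w 5%nat)). lra.
Qed.

Lemma Rabs_box_clamp_le x j : (j < 6)%nat -> Rabs (box_clamp x j) <= box_bound.
Proof.
  intros Hj. assert (Rabs (box_clamp x j) <= Rabs (w j) + 1)
    by (unfold box_clamp, Rmax, Rmin; repeat destruct Rle_dec; split_Rabs; lra).
  unfold box_bound. pose proof (Rabs_pos (w 0%nat)). pose proof (Rabs_pos (w 1%nat)).
  pose proof (Rabs_pos (w 2%nat)). pose proof (Rabs_pos (w 3%nat)).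
  pose proof (Rabs_pos (w 4%nat)). pose proof (Rabs_pos (w 5%nat)).
  destruct j as [|[|[|[|[|[|j]]]]]]; lra || lia.
Qed.

Lemma ode_coefs_le : Rabs (- nu) <= coef_bound /\ Rabs mu <= coef_bound /\
  Rabs (nu - mu) <= coef_bound /\ Rabs lam <= coef_bound /\ Rabs (-1) <= 1 /\ Rabs 1 <= 1.
Proof.
  unfold coef_bound. rewrite Rabs_Ropp, Rabs_R1, (Rabs_left (-1)) by lra.
  pose proof (Rabs_pos lam). pose proof (Rabs_pos mu). pose proof (Rabs_pos nu).
  pose proof (Rabs_triang nu (- mu)). rewrite Rabs_Ropp in *.
  repeat split; unfold Rminus; lra.
Qed.

Lemma truncated_field_bounded x i : Rabs (truncated_field x i) <= trunc_bound.
Proof.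
  unfold truncated_field, trunc_bound. destruct ode_coefs_le as (C1 & C2 & C3 & C4 & C5 & C6).
  assert (B : forall j, (j < 6)%nat -> Rabs (box_clamp x j) <= box_bound) by apply Rabs_box_clamp_le.
  destruct i as [|[|[|[|[|[|i]]]]]]; simpl; try (apply ode_term_bound; auto; apply B; lia).
  rewrite Rabs_R0. pose proof coef_bound_ge0. pose proof box_bound_ge1.
  apply Rmult_le_pos; nra.
Qed.

Lemma truncated_field_lipschitz x x' d : (forall j, Rabs (x j - x' j) <= d) ->
  forall i, Rabs (truncated_field x i - truncated_field x' i) <= trunc_lip * d.
Proof.
  intros Hd i.
  assert (Hd0 : 0 <= d) by (eapply Rle_trans; [apply Rabs_pos | apply (Hd 0%nat)]).
  assert (Hd' : forall j, Rabs (box_clamp x j - box_clamp x' j) <= d)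
    by (intros j; eapply Rle_trans; [apply box_clamp_lipschitz | apply Hd]).
  pose proof coef_bound_ge0. pose proof box_bound_ge1.
  apply Rle_trans with (coef_bound * (1 + 4 * box_bound) * d); [|unfold trunc_lip; nra].
  unfold truncated_field. destruct ode_coefs_le as (C1 & C2 & C3 & C4 & C5 & C6).
  assert (B : forall j, (j < 6)%nat -> Rabs (box_clamp x j) <= box_bound) by apply Rabs_box_clamp_le.
  assert (B' : forall j, (j < 6)%nat -> Rabs (box_clamp x' j) <= box_bound) by apply Rabs_box_clamp_le.
  destruct i as [|[|[|[|[|[|i]]]]]]; simpl;
    try (apply ode_term_lipschitz; auto; first [apply B; lia | apply B'; lia]).
  rewrite Rminus_0_r, Rabs_R0. apply Rmult_le_pos; nra.
Qed.

Lemma trunc_constants : 0 < trunc_lip /\ 0 <= trunc_bound /\ 0 < trunc_eps /\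
  trunc_eps * trunc_lip <= / 2 /\ trunc_eps * trunc_bound <= 1.
Proof.
  pose proof coef_bound_ge0. pose proof box_bound_ge1.
  assert (HL : 0 < trunc_lip) by (unfold trunc_lip; nra).
  assert (HK : 0 <= trunc_bound) by (unfold trunc_bound; apply Rmult_le_pos; nra).
  assert (He1 := Rmin_l (/ (2 * trunc_lip)) (/ (trunc_bound + 1))).
  assert (He2 := Rmin_r (/ (2 * trunc_lip)) (/ (trunc_bound + 1))).
  fold trunc_eps in He1, He2.
  assert (HeL : / (2 * trunc_lip) * trunc_lip = / 2) by (field; lra).
  assert (HeK : / (trunc_bound + 1) * (trunc_bound + 1) = 1) by (field; lra).
  assert (0 < / (trunc_bound + 1)) by (apply Rinv_0_lt_compat; lra).
  repeat split; auto.
  - apply Rmin_pos; apply Rinv_0_lt_compat; lra.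
  - rewrite <- HeL. apply Rmult_le_compat_r; lra.
  - apply Rle_trans with (/ (trunc_bound + 1) * trunc_bound); [apply Rmult_le_compat_r; lra | nra].
Qed.

End Truncation.

Lemma ode_local_solution (lam mu nu : R) (w : state) :
  exists (eps : R) (y : R -> state), 0 < eps /\ (forall i, y 0 i = w i) /\
    forall t i, - eps < t < eps -> is_derive (fun s => y s i) t (ode_field lam mu nu (y t) i).
Proof.
  destruct (trunc_constants lam mu nu w) as (HL & HK & He & HeL & HeK).
  destruct (picard_lindelof (truncated_field lam mu nu w) _ _ _ w HL HK He HeL
              (truncated_field_bounded lam mu nu w) (truncated_field_lipschitz lam mu nu w))
    as (y & Hy0 & Hyw & Hyd).
  exists (trunc_eps lam mu nu w), y. split; [exact He | split; [exact Hy0 |]].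
  intros t i Ht.
  assert (Hbox : forall j, box_clamp w (y t) j = y t j)
    by (intros j; apply box_clamp_id; eapply Rle_trans; [apply Hyw | exact HeK]).
  replace (ode_field lam mu nu (y t) i) with (truncated_field lam mu nu w (y t) i); [now apply Hyd|].
  unfold truncated_field. destruct i as [|[|[|[|[|[|i]]]]]]; simpl; rewrite ?Hbox; reflexivity.
Qed.

(** * The conserved quantity Im(z1 z2 z3) *)

Lemma filterdiff_pair {U V W : NormedModule R_AbsRing} (f : U -> V) (g : U -> W) x lf lg :
  filterdiff f (locally x) lf -> filterdiff g (locally x) lg ->
  filterdiff (fun u => (f u, g u)) (locally x) (fun u => (lf u, lg u)).
Proof.
  intros Hf Hg. apply (filterdiff_comp'_2 f g (fun a b => (a, b)) x lf lg (fun a b => (a, b)) Hf Hg).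
  apply filterdiff_linear, is_linear_prod; [apply is_linear_fst | apply is_linear_snd].
Qed.

Lemma is_derive_pair {V W : NormedModule R_AbsRing} (f : R -> V) (g : R -> W) t a b :
  is_derive f t a -> is_derive g t b -> is_derive (fun s => (f s, g s)) t (a, b).
Proof.
  intros Hf Hg. eapply filterdiff_ext_lin; [apply (filterdiff_pair f g t _ _ Hf Hg)|].
  reflexivity.
Qed.

Lemma is_derive_fst {V W : NormedModule R_AbsRing} (z : R -> V * W) t l :
  is_derive z t l -> is_derive (fun s => fst (z s)) t (fst l).
Proof.
  intros H. eapply filterdiff_ext_lin.
  - apply (filterdiff_comp' z fst t _ (fun c : prod_NormedModule _ V W => fst c) H).
    apply filterdiff_linear, is_linear_fst.
  - reflexivity.
Qed.

Lemma is_derive_snd {V W : NormedModule R_AbsRing} (z : R -> V * W) t l :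
  is_derive z t l -> is_derive (fun s => snd (z s)) t (snd l).
Proof.
  intros H. eapply filterdiff_ext_lin.
  - apply (filterdiff_comp' z snd t _ (fun c : prod_NormedModule _ V W => snd c) H).
    apply filterdiff_linear, is_linear_snd.
  - reflexivity.
Qed.

Lemma derive0_const_on_interval (f : R -> R) a b :
  (forall t, a < t < b -> is_derive f t 0) -> exists A, forall t, a < t < b -> f t = A.
Proof.
  intros H. exists (f ((a + b) / 2)). intros t Ht.
  destruct (Rtotal_order t ((a + b) / 2)) as [Hl|[He|Hg]].
  - apply (eq_is_derive f t ((a + b) / 2)); [|lra]. intros s Hs. apply H. lra.
  - subst; reflexivity.
  - symmetry. apply (eq_is_derive f ((a + b) / 2) t); [|lra]. intros s Hs. apply H. lra.
Qed.

Lemma is_derive_Im_prod_0 (lam mu nu : R) (z1 z2 z3 : R -> C) t :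
  is_derive z1 t (RtoC (- nu) * z1 t - RtoC lam * Cconj (z2 t * z3 t))%C ->
  is_derive z2 t (RtoC mu * z2 t - RtoC lam * Cconj (z3 t * z1 t))%C ->
  is_derive z3 t (RtoC (nu - mu) * z3 t - RtoC lam * Cconj (z1 t * z2 t))%C ->
  is_derive (fun s => Im (z1 s * z2 s * z3 s)%C) t 0.
Proof.
  intros H1 H2 H3.
  apply is_derive_fst in H1 as A1, H2 as A2, H3 as A3.
  apply is_derive_snd in H1 as B1, H2 as B2, H3 as B3.
  set (p1 := fun s => fst (z1 s)) in *. set (q1 := fun s => snd (z1 s)) in *.
  set (p2 := fun s => fst (z2 s)) in *. set (q2 := fun s => snd (z2 s)) in *.
  set (p3 := fun s => fst (z3 s)) in *. set (q3 := fun s => snd (z3 s)) in *.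
  apply (is_derive_ext
           (fun s => (p1 s * p2 s - q1 s * q2 s) * q3 s + (p1 s * q2 s + q1 s * p2 s) * p3 s)).
  { intros s. unfold p1, p2, p3, q1, q2, q3. destruct (z1 s), (z2 s), (z3 s). simpl. ring. }
  auto_derive.
  - repeat split; eexists; eassumption.
  - rewrite (is_derive_unique (fun x : R => p1 x) t _ A1), (is_derive_unique (fun x : R => p2 x) t _ A2),
      (is_derive_unique (fun x : R => p3 x) t _ A3), (is_derive_unique (fun x : R => q1 x) t _ B1),
      (is_derive_unique (fun x : R => q2 x) t _ B2), (is_derive_unique (fun x : R => q3 x) t _ B3).
    unfold p1, p2, p3, q1, q2, q3. destruct (z1 t), (z2 t), (z3 t). simpl. ring.
Qed.

Lemma is_solution_Im_prod_const (lam mu nu a b : R) (x1 : R -> R) (z1 z2 z3 : R -> C) :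
  is_solution lam mu nu a b x1 z1 z2 z3 ->
  exists A : R, forall t, a < t < b -> Im (z1 t * z2 t * z3 t)%C = A.
Proof.
  intros Hs. apply derive0_const_on_interval. intros t Ht.
  destruct (Hs t Ht) as (_ & H1 & H2 & H3). exact (is_derive_Im_prod_0 lam mu nu z1 z2 z3 t H1 H2 H3).
Qed.

(** * Orbit directions and the ODE field in R^7 *)

Definition pt_state (q : pt) : state := fun i =>
  match i with
  | 0 => fst (pz1 q) | 1 => snd (pz1 q) | 2 => fst (pz2 q) | 3 => snd (pz2 q)
  | 4 => fst (pz3 q) | 5 => snd (pz3 q) | _ => 0
  end.

Definition state_z1 (x : state) : C := (x 0%nat, x 1%nat).
Definition state_z2 (x : state) : C := (x 2%nat, x 3%nat).
Definition state_z3 (x : state) : C := (x 4%nat, x 5%nat).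
Definition state_pt (a : R) (x : state) : pt := mkpt a (state_z1 x) (state_z2 x) (state_z3 x).

(* The infinitesimal action of (c, a1, a2) in the Lie algebra of R x U(1)^2 at q. *)
Definition orbit_vec (c a1 a2 : R) (q : pt) : pt :=
  mkpt c (- a1 * snd (pz1 q), a1 * fst (pz1 q)) (- a2 * snd (pz2 q), a2 * fst (pz2 q))
    ((a1 + a2) * snd (pz3 q), - (a1 + a2) * fst (pz3 q)).

Definition ode_vec (lam mu nu : R) (q : pt) : pt := state_pt 0 (ode_field lam mu nu (pt_state q)).

Definition gram2 (u v : pt) : R := ip u u * ip v v - ip u v * ip u v.

Ltac expand_pt :=
  unfold phi0, gram3, gram2, dx3, det3, ip, xc, orbit_vec, ode_vec, ode_field, ode_term,
    pt_state, state_pt, state_z1, state_z2, state_z3, mkpt, px1, pz1, pz2, pz3, Re, Im; simpl.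

Lemma pt_ext (q q' : pt) :
  px1 q = px1 q' -> fst (pz1 q) = fst (pz1 q') -> snd (pz1 q) = snd (pz1 q') ->
  fst (pz2 q) = fst (pz2 q') -> snd (pz2 q) = snd (pz2 q') ->
  fst (pz3 q) = fst (pz3 q') -> snd (pz3 q) = snd (pz3 q') -> q = q'.
Proof.
  destruct q as [[[x [p1 r1]] [p2 r2]] [p3 r3]], q' as [[[x' [p1' r1']] [p2' r2']] [p3' r3']].
  unfold px1, pz1, pz2, pz3; simpl. intros; subst; reflexivity.
Qed.

Lemma ip_orbit_vec_ode_vec c a1 a2 lam mu nu q : ip (orbit_vec c a1 a2 q) (ode_vec lam mu nu q) = 0.
Proof. destruct q as [[[x [p1 r1]] [p2 r2]] [p3 r3]]. expand_pt. ring. Qed.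

(* The ODE field of parameters b x b' is the vector cross product of the orbit directions b and b'. *)
Lemma phi0_orbit_vec_ode_vec c a1 a2 c' a1' a2' lam mu nu q :
  phi0 (orbit_vec c a1 a2 q) (orbit_vec c' a1' a2' q) (ode_vec lam mu nu q) =
  ip (ode_vec (a1 * a2' - a2 * a1') (a2 * c' - c * a2') (c * a1' - a1 * c') q) (ode_vec lam mu nu q).
Proof. destruct q as [[[x [p1 r1]] [p2 r2]] [p3 r3]]. expand_pt. ring. Qed.

Lemma gram2_orbit_vec c a1 a2 c' a1' a2' q :
  gram2 (orbit_vec c a1 a2 q) (orbit_vec c' a1' a2' q) =
  ip (ode_vec (a1 * a2' - a2 * a1') (a2 * c' - c * a2') (c * a1' - a1 * c') q)
     (ode_vec (a1 * a2' - a2 * a1') (a2 * c' - c * a2') (c * a1' - a1 * c') q).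
Proof. destruct q as [[[x [p1 r1]] [p2 r2]] [p3 r3]]. expand_pt. ring. Qed.

Lemma gram3_orthogonal u v w : ip u w = 0 -> ip v w = 0 -> gram3 u v w = gram2 u v * ip w w.
Proof.
  intros Huw Hvw.
  assert (ip w u = ip u w /\ ip w v = ip v w /\ ip v u = ip u v) as (E1 & E2 & E3)
    by (unfold ip; repeat split; ring).
  unfold gram3, gram2, det3. rewrite E1, E2, E3, Huw, Hvw. ring.
Qed.

Lemma ip_ode_vec_scale lam mu nu k q :
  ip (ode_vec (k * lam) (k * mu) (k * nu) q) (ode_vec (k * lam) (k * mu) (k * nu) q)
  = k * k * ip (ode_vec lam mu nu q) (ode_vec lam mu nu q).
Proof. destruct q as [[[x [p1 r1]] [p2 r2]] [p3 r3]]. expand_pt. ring. Qed.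

Lemma ip_ode_vec_scale_l lam mu nu k q :
  ip (ode_vec (k * lam) (k * mu) (k * nu) q) (ode_vec lam mu nu q)
  = k * ip (ode_vec lam mu nu q) (ode_vec lam mu nu q).
Proof. destruct q as [[[x [p1 r1]] [p2 r2]] [p3 r3]]. expand_pt. ring. Qed.

Definition pt0 : pt := mkpt 0 (RtoC 0) (RtoC 0) (RtoC 0).

Lemma ip_pt0_l v : ip pt0 v = 0.
Proof. unfold ip, xc, pt0, RtoC, mkpt, px1, pz1, pz2, pz3, Re, Im; simpl. ring. Qed.

Lemma gram2_pt0_l v : gram2 pt0 v = 0.
Proof. unfold gram2. rewrite !ip_pt0_l. ring. Qed.

Lemma gram2_pt0_r v : gram2 v pt0 = 0.
Proof. unfold gram2, ip, xc, pt0, mkpt, px1, pz1, pz2, pz3, Re, Im; simpl. ring. Qed.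

Lemma ip_self_ge0 u : 0 <= ip u u.
Proof.
  unfold ip. pose proof (Rle_0_sqr (xc 1 u)). pose proof (Rle_0_sqr (xc 2 u)).
  pose proof (Rle_0_sqr (xc 3 u)). pose proof (Rle_0_sqr (xc 4 u)). pose proof (Rle_0_sqr (xc 5 u)).
  pose proof (Rle_0_sqr (xc 6 u)). pose proof (Rle_0_sqr (xc 7 u)). unfold Rsqr in *. lra.
Qed.

Definition rotate (x c1 s1 c2 s2 c3 s3 : R) (q : pt) : pt :=
  mkpt (px1 q + x)
    (c1 * fst (pz1 q) - s1 * snd (pz1 q), c1 * snd (pz1 q) + s1 * fst (pz1 q))
    (c2 * fst (pz2 q) - s2 * snd (pz2 q), c2 * snd (pz2 q) + s2 * fst (pz2 q))
    (c3 * fst (pz3 q) - s3 * snd (pz3 q), c3 * snd (pz3 q) + s3 * fst (pz3 q)).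

Lemma act_rotate c phi1 phi2 q : act c phi1 phi2 q =
  rotate c (cos phi1) (sin phi1) (cos phi2) (sin phi2)
    (cos (- (phi1 + phi2))) (sin (- (phi1 + phi2))) q.
Proof. destruct q as [[[x [a1 b1]] [a2 b2]] [a3 b3]]. reflexivity. Qed.

Lemma cos_sin_sqr phi : cos phi * cos phi + sin phi * sin phi = 1.
Proof. pose proof (sin2_cos2 phi). unfold Rsqr in *. lra. Qed.

Lemma cos_sin_neg_sum phi1 phi2 :
  cos phi1 = cos phi2 * cos (- (phi1 + phi2)) - sin phi2 * sin (- (phi1 + phi2)) /\
  sin phi1 = - (sin phi2 * cos (- (phi1 + phi2)) + cos phi2 * sin (- (phi1 + phi2))).
Proof.
  split.
  - rewrite <- cos_plus. replace (phi2 + - (phi1 + phi2)) with (- phi1) by ring.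
    symmetry. apply cos_neg.
  - replace (sin phi2 * cos (- (phi1 + phi2)) + cos phi2 * sin (- (phi1 + phi2)))
      with (sin (phi2 + - (phi1 + phi2))) by (rewrite sin_plus; ring).
    replace (phi2 + - (phi1 + phi2)) with (- phi1) by ring. rewrite sin_neg. ring.
Qed.

Section Rotation.

(* Rotation of z1, z2, z3 by unit complex numbers u1, u2, u3 with u1 u2 u3 = 1. *)
Variables (x c1 s1 c2 s2 c3 s3 : R).
Hypothesis c1_def : c1 = c2 * c3 - s2 * s3.
Hypothesis s1_def : s1 = - (s2 * c3 + c2 * s3).
Hypothesis unit2 : c2 * c2 + s2 * s2 = 1.
Hypothesis unit3 : c3 * c3 + s3 * s3 = 1.

Lemma ode_vec_rotate lam mu nu q :
  ode_vec lam mu nu (rotate x c1 s1 c2 s2 c3 s3 q)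
  = rotate 0 c1 s1 c2 s2 c3 s3 (ode_vec lam mu nu q).
Proof.
  subst c1 s1. destruct q as [[[x0 [p1 r1]] [p2 r2]] [p3 r3]].
  apply pt_ext; unfold rotate; expand_pt; apply Rminus_diag_uniq.
  1-3: ring.
  - transitivity ((- lam) * (c3 * c3 + s3 * s3 - 1)
                  * (c2 * (p3 * p1 - r3 * r1) + s2 * (p3 * r1 + r3 * p1))); [ring|].
    rewrite unit3; ring.
  - transitivity ((- lam) * (c3 * c3 + s3 * s3 - 1)
                  * (- c2 * (p3 * r1 + r3 * p1) + s2 * (p3 * p1 - r3 * r1))); [ring|].
    rewrite unit3; ring.
  - transitivity ((- lam) * (c2 * c2 + s2 * s2 - 1)
                  * (c3 * (p1 * p2 - r1 * r2) + s3 * (p1 * r2 + r1 * p2))); [ring|].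
    rewrite unit2; ring.
  - transitivity ((- lam) * (c2 * c2 + s2 * s2 - 1)
                  * (- c3 * (p1 * r2 + r1 * p2) + s3 * (p1 * p2 - r1 * r2))); [ring|].
    rewrite unit2; ring.
Qed.

Lemma ip_rotate0 u : ip (rotate 0 c1 s1 c2 s2 c3 s3 u) (rotate 0 c1 s1 c2 s2 c3 s3 u) = ip u u.
Proof.
  transitivity ((c2 * c2 + s2 * s2) * (c3 * c3 + s3 * s3)
       * (fst (pz1 u) * fst (pz1 u) + snd (pz1 u) * snd (pz1 u))
     + (c2 * c2 + s2 * s2) * (fst (pz2 u) * fst (pz2 u) + snd (pz2 u) * snd (pz2 u))
     + (c3 * c3 + s3 * s3) * (fst (pz3 u) * fst (pz3 u) + snd (pz3 u) * snd (pz3 u))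
     + px1 u * px1 u).
  - subst c1 s1. unfold ip, rotate, xc, mkpt, px1, pz1, pz2, pz3, Re, Im; simpl. ring.
  - rewrite unit2, unit3. unfold ip, xc, Re, Im. ring.
Qed.

End Rotation.

Lemma ip_self_eq0 u : ip u u = 0 -> forall i, xc i u = 0.
Proof.
  intros H i. unfold ip in H.
  pose proof (Rle_0_sqr (xc 1 u)). pose proof (Rle_0_sqr (xc 2 u)).
  pose proof (Rle_0_sqr (xc 3 u)). pose proof (Rle_0_sqr (xc 4 u)). pose proof (Rle_0_sqr (xc 5 u)).
  pose proof (Rle_0_sqr (xc 6 u)). pose proof (Rle_0_sqr (xc 7 u)). unfold Rsqr in *.
  destruct i as [|[|[|[|[|[|[|[|i]]]]]]]]; try reflexivity; apply Rsqr_0_uniq; unfold Rsqr; lra.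
Qed.

Lemma ip_orbit_vec_eq0 c a1 a2 q : ip (orbit_vec c a1 a2 q) (orbit_vec c a1 a2 q) = 0 ->
  c = 0 /\ (RtoC a1 * Ci * pz1 q)%C = RtoC 0 /\ (RtoC a2 * Ci * pz2 q)%C = RtoC 0 /\
  (RtoC (- (a1 + a2)) * Ci * pz3 q)%C = RtoC 0.
Proof.
  intros H. pose proof (ip_self_eq0 _ H) as Hx.
  destruct q as [[[x [p1 r1]] [p2 r2]] [p3 r3]].
  assert (X1 := Hx 1%nat). assert (X2 := Hx 2%nat). assert (X3 := Hx 3%nat).
  assert (X4 := Hx 4%nat). assert (X5 := Hx 5%nat). assert (X6 := Hx 6%nat). assert (X7 := Hx 7%nat).
  unfold xc, orbit_vec, mkpt, px1, pz1, pz2, pz3, Re, Im in *; simpl in *.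
  repeat split; [exact X1 | ..]; apply injective_projections; simpl; lra.
Qed.

Lemma quadratic_form_degenerate a b c : a * c - b * b = 0 ->
  exists al be, (al <> 0 \/ be <> 0) /\ al * al * a + 2 * al * be * b + be * be * c = 0.
Proof.
  intros H. destruct (Req_dec a 0) as [Ha|Ha].
  - exists 1, 0. split; [left; lra|]. subst a. ring.
  - exists b, (- a). split; [right; lra|].
    transitivity (a * (a * c - b * b)); [ring | rewrite H; ring].
Qed.

Definition R3 : NormedModule R_AbsRing :=
  prod_NormedModule R_AbsRing (prod_NormedModule R_AbsRing R_NormedModule R_NormedModule)
    R_NormedModule.

Definition C2 : NormedModule R_AbsRing := prod_NormedModule R_AbsRing R_NormedModule R_NormedModule.

Definition pt_space : NormedModule R_AbsRing :=
  prod_NormedModule R_AbsRing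
    (prod_NormedModule R_AbsRing (prod_NormedModule R_AbsRing R_NormedModule C2) C2) C2.

Lemma is_linear_lin2 (a b : R) :
  is_linear (U := R3) (V := R_NormedModule) (fun h : R * R * R => a * fst (fst h) + b * snd (fst h)).
Proof.
  split.
  - intros x y. unfold plus; simpl. unfold plus; simpl. ring.
  - intros c x. unfold scal; simpl. unfold scal; simpl. unfold mult; simpl. ring.
  - exists (Rabs a + Rabs b + 1). split; [pose proof (Rabs_pos a); pose proof (Rabs_pos b); lra|].
    intros h. change (Rabs (a * fst (fst h) + b * snd (fst h)) <= (Rabs a + Rabs b + 1) * norm h).
    assert (H1 : Rabs (fst (fst h)) <= norm h)
      by (eapply Rle_trans; [apply (norm_le_prod_norm_1 (fst h)) | apply (norm_le_prod_norm_1 h)]).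
    assert (H2 : Rabs (snd (fst h)) <= norm h)
      by (eapply Rle_trans; [apply (norm_le_prod_norm_2 (fst h)) | apply (norm_le_prod_norm_1 h)]).
    pose proof (norm_ge_0 h). eapply Rle_trans; [apply Rabs_triang|].
    assert (Rabs (a * fst (fst h)) <= Rabs a * norm h) by (apply Rabs_mul_le; auto; lra).
    assert (Rabs (b * snd (fst h)) <= Rabs b * norm h) by (apply Rabs_mul_le; auto; lra).
    lra.
Qed.

Lemma filterdiff_lin2 (a b : R) (u : R * R * R) :
  filterdiff (fun v : R * R * R => a * fst (fst v) + b * snd (fst v)) (locally u)
    (fun h : R * R * R => a * fst (fst h) + b * snd (fst h)).
Proof. apply filterdiff_linear, is_linear_lin2. Qed.

Lemma filterdiff_comp_R (f : R3 -> R) (g : R -> R) lf dg u :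
  filterdiff f (locally u) lf -> is_derive g (f u) dg ->
  filterdiff (fun v => g (f v)) (locally u) (fun h => lf h * dg).
Proof.
  intros Hf Hg. eapply filterdiff_ext_lin; [apply (filterdiff_comp' f g u lf _ Hf Hg)|]. reflexivity.
Qed.

Lemma filterdiff_snd_comp (P : R -> R) dP (u : R * R * R) : is_derive P (snd u) dP ->
  filterdiff (fun v : R * R * R => P (snd v)) (locally u) (fun h : R * R * R => snd h * dP).
Proof.
  intros H. apply (filterdiff_comp_R snd); [|exact H].
  apply filterdiff_linear, is_linear_snd.
Qed.

Lemma filterdiff_mult_R3 (f g : R3 -> R) lf lg u :
  filterdiff f (locally u) lf -> filterdiff g (locally u) lg ->
  filterdiff (fun v => f v * g v) (locally u) (fun h => lf h * g u + f u * lg h).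
Proof.
  intros Hf Hg. eapply filterdiff_ext_lin.
  - apply (filterdiff_mult_fct (K := R_AbsRing) f g u lf lg);
      [intros; apply Rmult_comm | exact Hf | exact Hg].
  - reflexivity.
Qed.

Lemma filterdiff_plus_R3 (f g : R3 -> R) lf lg u :
  filterdiff f (locally u) lf -> filterdiff g (locally u) lg ->
  filterdiff (fun v => f v + g v) (locally u) (fun h => lf h + lg h).
Proof. intros Hf Hg. exact (filterdiff_plus_fct (V := R_NormedModule) f g lf lg Hf Hg). Qed.

Lemma filterdiff_minus_R3 (f g : R3 -> R) lf lg u :
  filterdiff f (locally u) lf -> filterdiff g (locally u) lg ->
  filterdiff (fun v => f v - g v) (locally u) (fun h => lf h - lg h).
Proof. intros Hf Hg. exact (filterdiff_minus_fct (V := R_NormedModule) f g lf lg Hf Hg). Qed.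

Lemma filterdiff_rotation (a b : R) (P Q : R -> R) dP dQ (u : R * R * R) :
  is_derive P (snd u) dP -> is_derive Q (snd u) dQ ->
  let th := fun v : R * R * R => a * fst (fst v) + b * snd (fst v) in
  filterdiff (fun v : R * R * R =>
     (cos (th v) * P (snd v) - sin (th v) * Q (snd v),
      cos (th v) * Q (snd v) + sin (th v) * P (snd v)))
   (locally u)
   (fun h : R * R * R =>
     (th h * (- sin (th u) * P (snd u) - cos (th u) * Q (snd u))
      + snd h * (cos (th u) * dP - sin (th u) * dQ),
      th h * (- sin (th u) * Q (snd u) + cos (th u) * P (snd u))
      + snd h * (cos (th u) * dQ + sin (th u) * dP))).
Proof.
  intros HP HQ th.
  assert (Hc := filterdiff_comp_R th cos _ _ u (filterdiff_lin2 a b u) (is_derive_cos (th u))).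
  assert (Hs := filterdiff_comp_R th sin _ _ u (filterdiff_lin2 a b u) (is_derive_sin (th u))).
  assert (HP' := filterdiff_snd_comp P dP u HP). assert (HQ' := filterdiff_snd_comp Q dQ u HQ).
  eapply filterdiff_ext_lin.
  - exact (filterdiff_pair _ _ _ _ _
      (filterdiff_minus_R3 _ _ _ _ _ (filterdiff_mult_R3 _ _ _ _ _ Hc HP')
                                     (filterdiff_mult_R3 _ _ _ _ _ Hs HQ'))
      (filterdiff_plus_R3 _ _ _ _ _ (filterdiff_mult_R3 _ _ _ _ _ Hc HQ')
                                    (filterdiff_mult_R3 _ _ _ _ _ Hs HP'))).
  - intros h. unfold th. apply injective_projections; simpl; ring.
Qed.

Lemma continuous_fst_at {U V : UniformSpace} (x : U * V) : continuous (fun q : U * V => fst q) x.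
Proof. destruct x. apply continuous_fst. Qed.

Lemma continuous_snd_at {U V : UniformSpace} (x : U * V) : continuous (fun q : U * V => snd q) x.
Proof. destruct x. apply continuous_snd. Qed.

Lemma continuous_pair {T U V : UniformSpace} (f : T -> U) (g : T -> V) x :
  continuous f x -> continuous g x -> continuous (fun q => (f q, g q)) x.
Proof.
  intros Hf Hg. apply (continuous_comp_2 f g (fun a b => (a, b)) x Hf Hg).
  eapply continuous_ext; [|apply continuous_id]. intros [a b]. reflexivity.
Qed.

Ltac solve_continuous :=
  match goal with
  | |- continuous (fun q => ?a) _ => apply continuous_const
  | |- continuous (fun q => q) _ => apply continuous_id
  | |- continuous (fun q => (@?f q, @?g q)) ?x => apply (continuous_pair f g x); solve_continuous
  | |- continuous (fun q => @?f q + @?g q) ?x =>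
      apply (continuous_plus (V := R_NormedModule) f g x); solve_continuous
  | |- continuous (fun q => @?f q - @?g q) ?x =>
      apply (continuous_minus (V := R_NormedModule) f g x); solve_continuous
  | |- continuous (fun q => @?f q * @?g q) ?x =>
      apply (continuous_mult (K := R_AbsRing) f g x); solve_continuous
  | |- continuous (fun q => - @?f q) ?x =>
      apply (continuous_opp (V := R_NormedModule) f x); solve_continuous
  | |- continuous (fun q => fst (@?f q)) ?x =>
      apply (continuous_comp f fst x); [solve_continuous | apply continuous_fst_at]
  | |- continuous (fun q => snd (@?f q)) ?x =>
      apply (continuous_comp f snd x); [solve_continuous | apply continuous_snd_at]
  | _ => idtac
  end.
(** * The Lie algebra of G *)

Lemma inG_basis lam mu nu : ~ (lam = 0 /\ mu = 0 /\ nu = 0) ->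
  exists b1c b1a b1b b2c b2a b2b k,
    inG lam mu nu b1c b1a b1b /\ inG lam mu nu b2c b2a b2b /\
    b1a * b2b - b1b * b2a = k * lam /\ b1b * b2c - b1c * b2b = k * mu /\
    b1c * b2a - b1a * b2c = k * nu /\ k <> 0 /\
    (forall c a1 a2, inG lam mu nu c a1 a2 -> exists s1 s2,
      c = b1c * s1 + b2c * s2 /\ a1 = b1a * s1 + b2a * s2 /\ a2 = b1b * s1 + b2b * s2).
Proof.
  unfold inG. intros Hn. destruct (Req_dec lam 0) as [Hl|Hl].
  - subst lam. exists 1, 0, 0, 0, nu, (- mu), 1.
    repeat split; try ring; [lra|].
    intros c a1 a2 H. destruct (Req_dec nu 0) as [Hnu|Hnu].
    + subst nu. assert (mu <> 0) by tauto.
      assert (a1 = 0) by (apply (Rmult_eq_reg_l mu); lra).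
      exists c, (- a2 / mu). repeat split; try field; auto. subst a1. field; auto.
    + exists c, (a1 / nu). repeat split; try field; auto.
      apply (Rmult_eq_reg_l nu); auto. field_simplify; auto. lra.
  - exists mu, (- lam), 0, nu, 0, (- lam), lam.
    repeat split; try ring; auto.
    intros c a1 a2 H. exists (- a1 / lam), (- a2 / lam). repeat split; try field; auto.
    apply (Rmult_eq_reg_l lam); auto. field_simplify; auto. lra.
Qed.

Section LieBasis.

Variables (lam mu nu b1c b1a b1b b2c b2a b2b k : R).
Hypothesis lmn_nz : ~ (lam = 0 /\ mu = 0 /\ nu = 0).
Hypothesis b1_in : inG lam mu nu b1c b1a b1b.
Hypothesis b2_in : inG lam mu nu b2c b2a b2b.
Hypothesis cross1 : b1a * b2b - b1b * b2a = k * lam.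
Hypothesis cross2 : b1b * b2c - b1c * b2b = k * mu.
Hypothesis cross3 : b1c * b2a - b1a * b2c = k * nu.
Hypothesis k_nz : k <> 0.
Hypothesis b_span : forall c a1 a2, inG lam mu nu c a1 a2 -> exists s1 s2,
  c = b1c * s1 + b2c * s2 /\ a1 = b1a * s1 + b2a * s2 /\ a2 = b1b * s1 + b2b * s2.

Lemma inG_comb al be :
  inG lam mu nu (al * b1c + be * b2c) (al * b1a + be * b2a) (al * b1b + be * b2b).
Proof.
  unfold inG in *. transitivity (al * (lam * b1c + mu * b1a + nu * b1b)
                                 + be * (lam * b2c + mu * b2a + nu * b2b)); [ring|].
  rewrite b1_in, b2_in. ring.
Qed.

Lemma scaled_lmn_eq0 x : x * k * lam = 0 -> x * k * mu = 0 -> x * k * nu = 0 -> x = 0.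
Proof.
  intros H1 H2 H3. destruct (Req_dec x 0) as [|Hx]; auto. exfalso. apply lmn_nz.
  assert (x * k <> 0) by (apply Rmult_integral_contrapositive; auto).
  repeat split; eapply Rmult_eq_reg_l; try eassumption; rewrite Rmult_0_r; assumption.
Qed.

Lemma cross_comb_l al be :
  (al * b1a + be * b2a) * b2b - (al * b1b + be * b2b) * b2a = al * k * lam /\
  (al * b1b + be * b2b) * b2c - (al * b1c + be * b2c) * b2b = al * k * mu /\
  (al * b1c + be * b2c) * b2a - (al * b1a + be * b2a) * b2c = al * k * nu.
Proof. rewrite !Rmult_assoc, <- cross1, <- cross2, <- cross3. repeat split; ring. Qed.

Lemma cross_comb_r al be :
  b1a * (al * b1b + be * b2b) - b1b * (al * b1a + be * b2a) = be * k * lam /\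
  b1b * (al * b1c + be * b2c) - b1c * (al * b1b + be * b2b) = be * k * mu /\
  b1c * (al * b1a + be * b2a) - b1a * (al * b1c + be * b2c) = be * k * nu.
Proof. rewrite !Rmult_assoc, <- cross1, <- cross2, <- cross3. repeat split; ring. Qed.

Lemma basis_independent al be :
  al * b1c + be * b2c = 0 -> al * b1a + be * b2a = 0 -> al * b1b + be * b2b = 0 ->
  al = 0 /\ be = 0.
Proof.
  intros Hc Ha Hb.
  destruct (cross_comb_l al be) as (L1 & L2 & L3), (cross_comb_r al be) as (R1 & R2 & R3).
  rewrite Hc, Ha, Hb in *.
  split; apply scaled_lmn_eq0; [rewrite <- L1 | rewrite <- L2 | rewrite <- L3
                               | rewrite <- R1 | rewrite <- R2 | rewrite <- R3]; ring.
Qed.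

Lemma gram2_comb_l al be q :
  gram2 (orbit_vec (al * b1c + be * b2c) (al * b1a + be * b2a) (al * b1b + be * b2b) q)
        (orbit_vec b2c b2a b2b q)
  = (al * k) * (al * k) * ip (ode_vec lam mu nu q) (ode_vec lam mu nu q).
Proof.
  destruct (cross_comb_l al be) as (L1 & L2 & L3).
  rewrite gram2_orbit_vec, L1, L2, L3, <- ip_ode_vec_scale. f_equal; f_equal; ring.
Qed.

Lemma gram2_comb_r al be q :
  gram2 (orbit_vec b1c b1a b1b q)
        (orbit_vec (al * b1c + be * b2c) (al * b1a + be * b2a) (al * b1b + be * b2b) q)
  = (be * k) * (be * k) * ip (ode_vec lam mu nu q) (ode_vec lam mu nu q).
Proof.
  destruct (cross_comb_r al be) as (R1 & R2 & R3).
  rewrite gram2_orbit_vec, R1, R2, R3, <- ip_ode_vec_scale. f_equal; f_equal; ring.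
Qed.

Lemma gram2_basis_orbit_vec q :
  gram2 (orbit_vec b1c b1a b1b q) (orbit_vec b2c b2a b2b q)
  = k * k * ip (ode_vec lam mu nu q) (ode_vec lam mu nu q).
Proof. rewrite gram2_orbit_vec, cross1, cross2, cross3. apply ip_ode_vec_scale. Qed.

(* |X1 /\ X2|^2 = k^2 |V|^2, so the orbit is 2-dimensional only where V does not vanish. *)
Lemma orbit_dim2_ode_vec_pos p :
  orbit_dim2 lam mu nu p -> 0 < ip (ode_vec lam mu nu p) (ode_vec lam mu nu p).
Proof.
  intros Horb. destruct (ip_self_ge0 (ode_vec lam mu nu p)) as [|H0]; auto. exfalso.
  assert (G : gram2 (orbit_vec b1c b1a b1b p) (orbit_vec b2c b2a b2b p) = 0)
    by (rewrite gram2_basis_orbit_vec, <- H0; ring).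
  destruct (quadratic_form_degenerate _ _ _ G) as (al & be & Hne & Hq).
  assert (Hxi : ip (orbit_vec (al * b1c + be * b2c) (al * b1a + be * b2a) (al * b1b + be * b2b) p)
                   (orbit_vec (al * b1c + be * b2c) (al * b1a + be * b2a) (al * b1b + be * b2b) p)
                = 0).
  { rewrite <- Hq. destruct p as [[[x [p1 r1]] [p2 r2]] [p3 r3]]. expand_pt. ring. }
  destruct (ip_orbit_vec_eq0 _ _ _ _ Hxi) as (Hc & H1 & H2 & H3).
  destruct (Horb _ _ _ (inG_comb al be) Hc H1 H2 H3) as [Ha Hb].
  destruct (basis_independent al be Hc Ha Hb). lra.
Qed.

(** * The chart of the G-orbit of a solution curve *)

Section Chart.

Variables (a0 eps : R) (y : R -> state).
Hypothesis y_derive : forall t i, - eps < t < eps ->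
  is_derive (fun s => y s i) t (ode_field lam mu nu (y t) i).
Hypothesis ode_vec_curve_pos : forall t, - eps < t < eps ->
  0 < ip (ode_vec lam mu nu (state_pt a0 (y t))) (ode_vec lam mu nu (state_pt a0 (y t))).

Definition chart_dom (u : R * R * R) : Prop := - eps < snd u < eps.

Definition chart (u : R * R * R) : pt :=
  act (b1c * fst (fst u) + b2c * snd (fst u)) (b1a * fst (fst u) + b2a * snd (fst u))
      (b1b * fst (fst u) + b2b * snd (fst u)) (state_pt a0 (y (snd u))).

(* dchart q h = X_xi(q) + h3 V(q), with xi = h1 b1 + h2 b2. *)
Definition dchart (q : pt) (h : R * R * R) : pt :=
  let c := b1c * fst (fst h) + b2c * snd (fst h) in
  let a1 := b1a * fst (fst h) + b2a * snd (fst h) in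
  let a2 := b1b * fst (fst h) + b2b * snd (fst h) in
  let V := ode_vec lam mu nu q in
  mkpt (c + snd h * px1 V)
    (- a1 * snd (pz1 q) + snd h * fst (pz1 V), a1 * fst (pz1 q) + snd h * snd (pz1 V))
    (- a2 * snd (pz2 q) + snd h * fst (pz2 V), a2 * fst (pz2 q) + snd h * snd (pz2 V))
    ((a1 + a2) * snd (pz3 q) + snd h * fst (pz3 V), - (a1 + a2) * fst (pz3 q) + snd h * snd (pz3 V)).

Lemma dchart_orbit_vec q h1 h2 : dchart q ((h1, h2), 0) =
  orbit_vec (h1 * b1c + h2 * b2c) (h1 * b1a + h2 * b2a) (h1 * b1b + h2 * b2b) q.
Proof. apply pt_ext; unfold dchart; expand_pt; ring. Qed.

Lemma dchart_e1 q : dchart q e1 = orbit_vec b1c b1a b1b q.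
Proof. apply pt_ext; unfold dchart, e1; expand_pt; ring. Qed.

Lemma dchart_e2 q : dchart q e2 = orbit_vec b2c b2a b2b q.
Proof. apply pt_ext; unfold dchart, e2; expand_pt; ring. Qed.

Lemma dchart_e3 q : dchart q e3 = ode_vec lam mu nu q.
Proof. apply pt_ext; unfold dchart, e3; expand_pt; ring. Qed.

Lemma ip_dchart_ode_vec q h :
  ip (dchart q h) (ode_vec lam mu nu q) = snd h * ip (ode_vec lam mu nu q) (ode_vec lam mu nu q).
Proof.
  destruct q as [[[x [p1 r1]] [p2 r2]] [p3 r3]], h as [[h1 h2] h3].
  unfold dchart. expand_pt. ring.
Qed.

Lemma chart_rotate u :
  let th1 := b1a * fst (fst u) + b2a * snd (fst u) in
  let th2 := b1b * fst (fst u) + b2b * snd (fst u) in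
  chart u = rotate (b1c * fst (fst u) + b2c * snd (fst u)) (cos th1) (sin th1) (cos th2) (sin th2)
              (cos (- (th1 + th2))) (sin (- (th1 + th2))) (state_pt a0 (y (snd u))).
Proof. apply act_rotate. Qed.

Lemma ode_vec_chart u :
  let th1 := b1a * fst (fst u) + b2a * snd (fst u) in
  let th2 := b1b * fst (fst u) + b2b * snd (fst u) in
  ode_vec lam mu nu (chart u) = rotate 0 (cos th1) (sin th1) (cos th2) (sin th2)
    (cos (- (th1 + th2))) (sin (- (th1 + th2))) (ode_vec lam mu nu (state_pt a0 (y (snd u)))).
Proof.
  intros th1 th2. rewrite chart_rotate.
  destruct (cos_sin_neg_sum th1 th2) as [T1 T2].
  apply ode_vec_rotate; auto; apply cos_sin_sqr.
Qed.

Lemma ode_vec_chart_pos u : chart_dom u ->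
  0 < ip (ode_vec lam mu nu (chart u)) (ode_vec lam mu nu (chart u)).
Proof.
  intros Hu. rewrite ode_vec_chart.
  destruct (cos_sin_neg_sum (b1a * fst (fst u) + b2a * snd (fst u))
                            (b1b * fst (fst u) + b2b * snd (fst u))) as [T1 T2].
  rewrite ip_rotate0; auto using cos_sin_sqr.
Qed.

Lemma chart_filterdiff u : chart_dom u -> filterdiff chart (locally u) (dchart (chart u)).
Proof.
  intros Hu. set (t := snd u) in *.
  set (th1 := fun v : R * R * R => b1a * fst (fst v) + b2a * snd (fst v)).
  set (th2 := fun v : R * R * R => b1b * fst (fst v) + b2b * snd (fst v)).
  set (th3 := fun v : R * R * R => (- (b1a + b1b)) * fst (fst v) + (- (b2a + b2b)) * snd (fst v)).
  set (rot := fun (th : R * R * R -> R) (P Q : R -> R) (v : R * R * R) =>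
    (cos (th v) * P (snd v) - sin (th v) * Q (snd v),
     cos (th v) * Q (snd v) + sin (th v) * P (snd v))).
  apply (filterdiff_ext (fun v : R * R * R =>
    (a0 + (b1c * fst (fst v) + b2c * snd (fst v)),
     rot th1 (fun s => y s 0%nat) (fun s => y s 1%nat) v,
     rot th2 (fun s => y s 2%nat) (fun s => y s 3%nat) v,
     rot th3 (fun s => y s 4%nat) (fun s => y s 5%nat) v))).
  { intros v. rewrite chart_rotate.
    apply pt_ext; unfold rot, th1, th2, th3, rotate; expand_pt; try reflexivity; repeat f_equal; ring. }
  assert (Hx : filterdiff (fun v : R * R * R => a0 + (b1c * fst (fst v) + b2c * snd (fst v))) (locally u)
                 (fun h : R * R * R => 0 + (b1c * fst (fst h) + b2c * snd (fst h))))
    by (apply filterdiff_plus_R3;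
        [apply (filterdiff_const (V := R_NormedModule)) | apply filterdiff_lin2]).
  assert (H1 := filterdiff_rotation b1a b2a _ _ _ _ u (y_derive t 0 Hu) (y_derive t 1 Hu)).
  assert (H2 := filterdiff_rotation b1b b2b _ _ _ _ u (y_derive t 2 Hu) (y_derive t 3 Hu)).
  assert (H3 := filterdiff_rotation (- (b1a + b1b)) (- (b2a + b2b)) _ _ _ _ u
                  (y_derive t 4 Hu) (y_derive t 5 Hu)).
  eapply filterdiff_ext_lin.
  - exact (filterdiff_pair _ _ _ _ _ (filterdiff_pair _ _ _ _ _ (filterdiff_pair _ _ _ _ _ Hx H1) H2) H3).
  - intros [[h1 h2] h3]. unfold dchart. cbv zeta. rewrite ode_vec_chart, chart_rotate.
    replace (- (b1a * fst (fst u) + b2a * snd (fst u) + (b1b * fst (fst u) + b2b * snd (fst u))))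
      with (th3 u) by (unfold th3; ring).
    apply pt_ext; unfold t, th1, th2, th3, rotate; expand_pt; ring.
Qed.

Lemma chart_dom_open :
  open (T := prod_UniformSpace (prod_UniformSpace R_UniformSpace R_UniformSpace) R_UniformSpace)
    chart_dom.
Proof.
  intros [u0 t] Hu. unfold chart_dom in Hu. simpl in Hu.
  assert (Hr : 0 < Rmin (eps - t) (eps + t)) by (apply Rmin_pos; lra).
  exists (mkposreal _ Hr). intros [v0 t'] [_ Hv]. change (Rabs (t' - t) < Rmin (eps - t) (eps + t)) in Hv.
  pose proof (Rmin_l (eps - t) (eps + t)). pose proof (Rmin_r (eps - t) (eps + t)).
  unfold chart_dom. simpl. split_Rabs; lra.
Qed.

Lemma dchart_continuous h q0 : continuous (fun q => dchart q h) q0.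
Proof.
  unfold dchart, ode_vec, ode_field, ode_term, pt_state, mkpt, px1, pz1, pz2, pz3. simpl.
  solve_continuous.
Qed.

Lemma dchart_chart_continuous u h : chart_dom u -> continuous (fun v => dchart (chart v) h) u.
Proof.
  intros Hu.
  assert (Hc : continuous (T := NormedModule.UniformSpace _ R3)
                 (U := NormedModule.UniformSpace _ pt_space) chart u)
    by exact (filterdiff_continuous (U := R3) (V := pt_space) chart u
                (ex_intro _ _ (chart_filterdiff u Hu))).
  exact (continuous_comp chart (fun q => dchart q h) u Hc (dchart_continuous h _)).
Qed.

Lemma dchart_injective u h : chart_dom u -> dchart (chart u) h = zero -> h = zero.
Proof.
  intros Hu Hz. set (q := chart u) in *. change (zero : pt) with pt0 in Hz.
  assert (HW := ode_vec_chart_pos u Hu). fold q in HW.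
  set (W := ip (ode_vec lam mu nu q) (ode_vec lam mu nu q)) in *.
  destruct h as [[h1 h2] h3].
  assert (H3 : h3 = 0).
  { pose proof (ip_dchart_ode_vec q ((h1, h2), h3)) as E.
    rewrite Hz, ip_pt0_l in E. simpl in E. fold W in E. nra. }
  subst h3. rewrite dchart_orbit_vec in Hz.
  assert (G1 := gram2_comb_l h1 h2 q). rewrite Hz, gram2_pt0_l in G1. fold W in G1.
  assert (G2 := gram2_comb_r h1 h2 q). rewrite Hz, gram2_pt0_r in G2. fold W in G2.
  assert (Hsq : forall x, 0 = x * k * (x * k) * W -> x = 0).
  { intros x Hx. assert (x * k = 0) as Hxk.
    { apply Rsqr_0_uniq. apply (Rmult_eq_reg_r W); unfold Rsqr; lra. }
    destruct (Rmult_integral _ _ Hxk); tauto. }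
  rewrite (Hsq h1 G1), (Hsq h2 G2). reflexivity.
Qed.

Definition orientation : R := if Rle_dec 0 k then 1 else -1.

(* phi0 = k |V|^2 and the Gram determinant is k^2 |V|^4. *)
Lemma phi0_dchart u : chart_dom u ->
  phi0 (dchart (chart u) e1) (dchart (chart u) e2) (dchart (chart u) e3)
  = vol3 orientation (dchart (chart u) e1) (dchart (chart u) e2) (dchart (chart u) e3).
Proof.
  intros Hu. assert (HW := ode_vec_chart_pos u Hu). set (q := chart u) in *.
  rewrite dchart_e1, dchart_e2, dchart_e3. unfold vol3.
  rewrite gram3_orthogonal by apply ip_orbit_vec_ode_vec.
  rewrite phi0_orbit_vec_ode_vec, cross1, cross2, cross3, ip_ode_vec_scale_l, gram2_basis_orbit_vec.
  set (W := ip (ode_vec lam mu nu q) (ode_vec lam mu nu q)) in *.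
  assert (Hk2 : Rabs k * Rabs k = k * k) by (rewrite <- Rabs_mult; apply Rabs_pos_eq; nra).
  replace (k * k * W * W) with ((Rabs k * W) * (Rabs k * W)) by (rewrite <- Hk2; ring).
  rewrite sqrt_square by (apply Rmult_le_pos; [apply Rabs_pos | lra]).
  unfold orientation. destruct (Rle_dec 0 k); [rewrite Rabs_right by lra | rewrite Rabs_left by lra]; ring.
Qed.

Lemma Mset_chart p :
  Mset lam mu nu eps (fun _ => a0) (fun t => state_z1 (y t)) (fun t => state_z2 (y t))
    (fun t => state_z3 (y t)) p <-> exists u, chart_dom u /\ chart u = p.
Proof.
  split.
  - intros (t & c & phi1 & phi2 & Ht & HG & Hp).
    destruct (b_span c phi1 phi2 HG) as (s1 & s2 & Ec & E1 & E2).
    exists ((s1, s2), t). split; [exact Ht|]. subst. reflexivity.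
  - intros (u & Hu & Hp).
    exists (snd u), (b1c * fst (fst u) + b2c * snd (fst u)), (b1a * fst (fst u) + b2a * snd (fst u)),
      (b1b * fst (fst u) + b2b * snd (fst u)).
    split; [exact Hu|]. split; [|rewrite <- Hp; reflexivity].
    replace (b1c * fst (fst u) + b2c * snd (fst u)) with (fst (fst u) * b1c + snd (fst u) * b2c) by ring.
    replace (b1a * fst (fst u) + b2a * snd (fst u)) with (fst (fst u) * b1a + snd (fst u) * b2a) by ring.
    replace (b1b * fst (fst u) + b2b * snd (fst u)) with (fst (fst u) * b1b + snd (fst u) * b2b) by ring.
    apply inG_comb.
Qed.

Lemma associative_orbit_of_curve :
  associative_3fold (Mset lam mu nu eps (fun _ => a0) (fun t => state_z1 (y t))
                       (fun t => state_z2 (y t)) (fun t => state_z3 (y t))).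
Proof.
  exists chart_dom, chart, (fun u h => dchart (chart u) h), (fun _ => orientation).
  split; [apply chart_dom_open|]. split; [apply Mset_chart|].
  split; [intros u Hu; apply chart_filterdiff, Hu|].
  split; [intros u h Hu; apply dchart_chart_continuous, Hu|].
  split; [intros u h Hu; apply dchart_injective, Hu|].
  split; [intros u _; unfold orientation; destruct (Rle_dec 0 k); auto|].
  split; [intros u _; apply continuous_const|].
  intros u Hu. apply phi0_dchart, Hu.
Qed.

End Chart.

End LieBasis.

Lemma ode_curve_through (lam mu nu : R) (p : pt) :
  0 < ip (ode_vec lam mu nu p) (ode_vec lam mu nu p) ->
  exists (eps : R) (y : R -> state), 0 < eps /\ state_pt (px1 p) (y 0) = p /\
    (forall t i, - eps < t < eps -> is_derive (fun s => y s i) t (ode_field lam mu nu (y t) i)) /\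
    (forall t, - eps < t < eps ->
       0 < ip (ode_vec lam mu nu (state_pt (px1 p) (y t))) (ode_vec lam mu nu (state_pt (px1 p) (y t)))).
Proof.
  intros HV0.
  destruct (ode_local_solution lam mu nu (pt_state p)) as (e0 & y & He0 & Hy0 & Hyd).
  set (W := fun t => ip (ode_vec lam mu nu (state_pt (px1 p) (y t)))
                        (ode_vec lam mu nu (state_pt (px1 p) (y t)))).
  assert (Hp : state_pt (px1 p) (y 0) = p).
  { destruct p as [[[x [p1 r1]] [p2 r2]] [p3 r3]].
    unfold state_pt, state_z1, state_z2, state_z3. rewrite !Hy0. reflexivity. }
  assert (HW0 : 0 < W 0) by (unfold W; rewrite Hp; exact HV0).
  assert (HWc : continuous W 0).
  { assert (Hyc : forall i, continuous (fun t => y t i) 0)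
      by (intros i; exact (ex_derive_continuous _ _ (ex_intro _ _ (Hyd 0 i ltac:(lra))))).
    unfold W. expand_pt. solve_continuous; apply Hyc. }
  assert (Hhalf : 0 < W 0 / 2) by lra.
  destruct (proj1 (filterlim_locally W (W 0)) HWc (mkposreal _ Hhalf)) as [d Hd].
  pose proof (Rmin_l e0 d). pose proof (Rmin_r e0 d). pose proof (cond_pos d).
  exists (Rmin e0 d), y. split; [apply Rmin_pos; lra|]. split; [exact Hp|]. split.
  - intros t i Ht. apply Hyd. lra.
  - intros t Ht. assert (Hball : Rabs (t - 0) < d) by (split_Rabs; lra).
    specialize (Hd t Hball). change (Rabs (W t - W 0) < W 0 / 2) in Hd.
    fold (W t). split_Rabs; lra.
Qed.

Lemma is_solution_state_curve (lam mu nu a0 eps : R) (y : R -> state) :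
  (forall t i, - eps < t < eps -> is_derive (fun s => y s i) t (ode_field lam mu nu (y t) i)) ->
  is_solution lam mu nu (- eps) eps (fun _ => a0) (fun t => state_z1 (y t))
    (fun t => state_z2 (y t)) (fun t => state_z3 (y t)).
Proof.
  intros Hyd t Ht.
  assert (D : forall j1 j2, is_derive (fun s => (y s j1, y s j2)) t
                 (ode_field lam mu nu (y t) j1, ode_field lam mu nu (y t) j2))
    by (intros; apply is_derive_pair; apply Hyd, Ht).
  split; [exact (is_derive_const (V := R_NormedModule) a0 t)|].
  split; [|split]; match goal with |- is_derive _ _ ?v => set (dz := v) end.
  - replace dz with ((ode_field lam mu nu (y t) 0%nat, ode_field lam mu nu (y t) 1%nat) : C);
      [exact (D 0%nat 1%nat) | apply injective_projections; unfold dz; expand_pt; ring].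
  - replace dz with ((ode_field lam mu nu (y t) 2%nat, ode_field lam mu nu (y t) 3%nat) : C);
      [exact (D 2%nat 3%nat) | apply injective_projections; unfold dz; expand_pt; ring].
  - replace dz with ((ode_field lam mu nu (y t) 4%nat, ode_field lam mu nu (y t) 5%nat) : C);
      [exact (D 4%nat 5%nat) | apply injective_projections; unfold dz; expand_pt; ring].
Qed.

Lemma Mset_not_in_slice (lam mu nu eps : R) (x1 : R -> R) (z1 z2 z3 : R -> C) :
  0 < eps -> (mu <> 0 \/ nu <> 0) ->
  forall x : R, ~ (forall p, Mset lam mu nu eps x1 z1 z2 z3 p -> px1 p = x).
Proof.
  intros Heps Hmn x Hall.
  assert (Hshift : exists phi1 phi2, inG lam mu nu 1 phi1 phi2).
  { unfold inG. destruct Hmn as [Hm|Hn].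
    - exists (- lam / mu), 0. field. exact Hm.
    - exists 0, (- lam / nu). field. exact Hn. }
  destruct Hshift as (phi1 & phi2 & Hg).
  set (q := mkpt (x1 0) (z1 0) (z2 0) (z3 0)).
  assert (H0 := Hall (act 0 0 0 q)). assert (H1 := Hall (act 1 phi1 phi2 q)).
  unfold act, px1, mkpt in H0, H1; simpl in H0, H1.
  enough (x1 0 + 0 = x /\ x1 0 + 1 = x) by lra.
  split; [apply H0 | apply H1]; exists 0; eexists _, _, _; (split; [lra | split; [|reflexivity]]).
  - unfold inG. ring.
  - exact Hg.
Qed.

Theorem theorem6p2 (lam mu nu : R) (a0 : R) (w1 w2 w3 : C) :
  ~ (lam = 0 /\ mu = 0 /\ nu = 0) ->
  orbit_dim2 lam mu nu (mkpt a0 w1 w2 w3) ->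
  (exists eps : R, 0 < eps /\
    exists (x1 : R -> R) (z1 z2 z3 : R -> C),
      is_solution lam mu nu (- eps) eps x1 z1 z2 z3 /\
      x1 0 = a0 /\ z1 0 = w1 /\ z2 0 = w2 /\ z3 0 = w3 /\
      associative_3fold (Mset lam mu nu eps x1 z1 z2 z3) /\
      ((mu <> 0 \/ nu <> 0) ->
         forall x : R, ~ (forall p, Mset lam mu nu eps x1 z1 z2 z3 p -> px1 p = x)) /\
      exists A : R, forall t, - eps < t < eps -> Im (z1 t * z2 t * z3 t)%C = A)
  /\
  (forall (a b : R) (x1 : R -> R) (z1 z2 z3 : R -> C),
     is_solution lam mu nu a b x1 z1 z2 z3 ->
     exists A : R, forall t, a < t < b -> Im (z1 t * z2 t * z3 t)%C = A).
Proof.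
  intros Hlmn Horb. split; [|apply is_solution_Im_prod_const].
  destruct (inG_basis _ _ _ Hlmn)
    as (b1c & b1a & b1b & b2c & b2a & b2b & k & Hb1 & Hb2 & Hc1 & Hc2 & Hc3 & Hk & Hspan).
  pose proof (orbit_dim2_ode_vec_pos _ _ _ _ _ _ _ _ _ _ Hlmn Hb1 Hb2 Hc1 Hc2 Hc3 Hk _ Horb) as HV0.
  destruct (ode_curve_through _ _ _ _ HV0) as (eps & y & Heps & Hy0 & Hyd & HV).
  simpl in Hy0, HV. injection Hy0 as Ez1 Ez2 Ez3.
  pose proof (is_solution_state_curve lam mu nu a0 eps y Hyd) as Hsol.
  exists eps. split; [exact Heps|].
  exists (fun _ => a0), (fun t => state_z1 (y t)), (fun t => state_z2 (y t)), (fun t => state_z3 (y t)).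
  do 5 (split; [assumption || reflexivity|]).
  split; [exact (associative_orbit_of_curve _ _ _ _ _ _ _ _ _ _ Hlmn Hb1 Hb2 Hc1 Hc2 Hc3 Hk
                   Hspan a0 eps y Hyd HV)|].
  split; [exact (Mset_not_in_slice _ _ _ _ _ _ _ _ Heps)|].
  exact (is_solution_Im_prod_const _ _ _ _ _ _ _ _ _ Hsol).
Qed.
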